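(* Let $r,m\ge0$ and $k\ge1$ be integers with $r+m\equiv1\pmod 2$, and let $n\ge0$. Then $$\lim_{q\to-1}\frac{\sum_{j=0}^{2n}q^{rj^2+mj}\begin{bmatrix} 2n\\ j\end{bmatrix}_{q^{2k}}}{(-q;q)_{2n}}=(k-r)^n,\qquad \lim_{q\to-1}\frac{\sum_{j=0}^{2n+1}q^{rj^2+mj}\begin{bmatrix} 2n+1\\ j\end{bmatrix}_{q^{2k}}}{(-q;q)_{2n+1}}=\big((2n+1)r+m\big)(k-r)^n.$$
   Context: $(x;q)_n=\prod_{j=0}^{n-1}(1-q^jx)$. The Gaussian binomial coefficient is $\begin{bmatrix} n\\ j\end{bmatrix}_q=\frac{(q;q)_n}{(q;q)_j(q;q)_{n-j}}$ for $0\le j\le n$, a polynomial in $q$; $\begin{bmatrix} n\\ j\end{bmatrix}_{q^{2k}}$ is this with $q$ replaced by $q^{2k}$. The quotients are rational functions of $q$ and the limits are taken as $q\to-1$. *)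

From Stdlib Require Import Reals.
Open Scope R_scope.

Fixpoint qpoch (x q : R) (n : nat) : R :=
  match n with
  | O => 1
  | S n' => qpoch x q n' * (1 - q ^ n' * x)
  end.

Definition gauss_binom (n j : nat) (q : R) : R :=
  qpoch q q n / (qpoch q q j * qpoch q q (n - j)).

Definition cor_num (r m k N : nat) (q : R) : R :=
  sum_f_R0 (fun j => q ^ (r * j * j + m * j) * gauss_binom N j (q ^ (2 * k))) N.

Definition cor_ratio (r m k N : nat) (q : R) : R :=
  cor_num r m k N q / qpoch (- q) q N.

From Stdlib Require Import Reals Lra Lia Factorial ClassicalEpsilon.
From Coquelicot Require Import Coquelicot.
Open Scope R_scope.

(* Put y = q^2 and w = (-q)^(r+m).  Since r j^2 + m j = 2 r (j choose 2) + (r + m) j with r + m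
   odd, the numerator is Gsum N y w, a polynomial in w obeying the q-Pascal recurrence
   G_(N+1)(w) = G_N(y^k w) - w G_N(y^r w).  Let q tend to -1 from the right (z = 1) or from the
   left (z = -1) along q = -sqrt(1 - z t^2), t -> 0+, so that y = 1 - z t^2 and w = 1 - t u with
   u -> 0.  Differentiating the recurrence d times in w and using the mean value theorem, the
   rescaled derivatives t^(d-N) (d/dw)^d G_N(y, 1 - t u) converge, uniformly for u near u0, to
   polynomials in u0 satisfying a Hermite-type recurrence; at u0 = 0 they equal
   (2n-1)!! ((k-r) z)^n for (N, d) = (2n, 0) and -(2n+1)!! ((k-r) z)^n for (2n+1, 1).
   Meanwhile (-q;q)_(2n) = (1 - q^2)^n (2n-1)!! (1 + o(1)), which settles the even case.  For
   N = 2n+1 the polynomial vanishes at w0 = y^(-rn) by the symmetry j <-> N - j, so the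
   numerator is (w - w0) times a first derivative, and w - w0 cancels the extra zero of
   1 + q^(2n+1) in the denominator. *)

Fixpoint geom (j : nat) (y : R) : R :=
  match j with O => 0 | S j => 1 + y * geom j y end.

Lemma geom_spec j y : 1 - y ^ j = (1 - y) * geom j y.
Proof.
  induction j as [|j IH]; simpl; [ring |].
  replace (1 - y * y ^ j) with ((1 - y) + y * (1 - y ^ j)) by ring.
  rewrite IH; ring.
Qed.

Lemma geom_continuous j y : continuity_pt (geom j) y.
Proof.
  induction j as [|j IH]; simpl.
  - now apply continuity_pt_const.
  - apply continuity_pt_plus; [now apply continuity_pt_const |].
    apply continuity_pt_mult; [apply derivable_continuous_pt, derivable_pt_id | exact IH].
Qed.

Lemma geom_1 j : geom j 1 = INR j.
Proof. induction j as [|j IH]; simpl geom; [reflexivity |]. rewrite IH, S_INR; ring. Qed.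

Lemma geom_ge_1 j y : 0 < y -> (1 <= j)%nat -> 1 <= geom j y.
Proof.
  intros Hy Hj. induction j as [|[|j] IH]; [lia | simpl; lra |].
  assert (1 <= geom (S j) y) by (apply IH; lia).
  simpl geom in *. nra.
Qed.

Definition near_scale (x0 : R) : (R * R -> Prop) -> Prop :=
  filter_prod (at_right 0) (locally x0).

Lemma ball_R (x d t : R) : ball x d t <-> Rabs (t - x) < d.
Proof. reflexivity. Qed.

Section Limits.

Context {T : Type} {F : (T -> Prop) -> Prop} {FF : Filter F}.

Lemma lim_locally_Rabs (f : T -> R) (a : R) :
  filterlim f F (locally a) <-> forall eps, 0 < eps -> F (fun x => Rabs (f x - a) < eps).
Proof.
  rewrite filterlim_locally. split.
  - intros H eps He. exact (H (mkposreal eps He)).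
  - intros H [eps He]. exact (H eps He).
Qed.

Lemma lim_plus (f g : T -> R) (a b : R) :
  filterlim f F (locally a) -> filterlim g F (locally b) ->
  filterlim (fun x => f x + g x) F (locally (a + b)).
Proof.
  intros Hf Hg. exact (filterlim_comp_2 f g Rplus Hf Hg (@filterlim_plus _ R_NormedModule a b)).
Qed.

Lemma lim_mult (f g : T -> R) (a b : R) :
  filterlim f F (locally a) -> filterlim g F (locally b) ->
  filterlim (fun x => f x * g x) F (locally (a * b)).
Proof. intros Hf Hg. exact (filterlim_comp_2 f g Rmult Hf Hg (@filterlim_mult R_AbsRing a b)). Qed.

Lemma lim_cont (h : R -> R) (f : T -> R) (a : R) :
  filterlim f F (locally a) -> continuity_pt h a ->
  filterlim (fun x => h (f x)) F (locally (h a)).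
Proof. intros Hf Hh. eapply filterlim_comp; [exact Hf | now apply continuity_pt_filterlim]. Qed.

Lemma lim_opp (f : T -> R) (a : R) :
  filterlim f F (locally a) -> filterlim (fun x => - f x) F (locally (- a)).
Proof.
  intros Hf. apply (lim_cont Ropp f a Hf).
  apply continuity_pt_opp, derivable_continuous_pt, derivable_pt_id.
Qed.

Lemma lim_minus (f g : T -> R) (a b : R) :
  filterlim f F (locally a) -> filterlim g F (locally b) ->
  filterlim (fun x => f x - g x) F (locally (a - b)).
Proof. intros Hf Hg. apply lim_plus; [exact Hf | exact (lim_opp g b Hg)]. Qed.

Lemma lim_inv (f : T -> R) (a : R) :
  filterlim f F (locally a) -> a <> 0 -> filterlim (fun x => / f x) F (locally (/ a)).
Proof.
  intros Hf Ha. apply (lim_cont Rinv f a Hf).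
  exact (continuity_pt_inv id a (derivable_continuous_pt _ _ (derivable_pt_id a)) Ha).
Qed.

Lemma lim_pow (f : T -> R) (a : R) (n : nat) :
  filterlim f F (locally a) -> filterlim (fun x => f x ^ n) F (locally (a ^ n)).
Proof.
  intros Hf. induction n as [|n IH]; simpl.
  - apply filterlim_const.
  - exact (lim_mult _ _ _ _ Hf IH).
Qed.

Lemma lim_dominated (v g1 g2 : T -> R) (a : R) :
  filterlim g1 F (locally a) -> filterlim g2 F (locally a) ->
  F (fun x => Rabs (v x - g1 x) <= Rabs (g2 x - g1 x)) ->
  filterlim v F (locally a).
Proof.
  rewrite !lim_locally_Rabs. intros H1 H2 Hv eps He.
  assert (B1 := H1 (eps / 3) ltac:(lra)); assert (B2 := H2 (eps / 3) ltac:(lra)).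
  generalize (filter_and _ _ Hv (filter_and _ _ B1 B2)).
  apply filter_imp. intros x [Hx [E1 E2]].
  pose proof (Rabs_triang (v x - g1 x) (g1 x - a)) as T1.
  pose proof (Rabs_triang (g2 x - a) (a - g1 x)) as T2.
  rewrite (Rabs_minus_sym a (g1 x)) in T2.
  replace (v x - g1 x + (g1 x - a)) with (v x - a) in T1 by ring.
  replace (g2 x - a + (a - g1 x)) with (g2 x - g1 x) in T2 by ring.
  lra.
Qed.

Lemma lim_scale_locally (tau : T -> R) :
  filterlim tau F (at_right 0) -> filterlim tau F (locally 0).
Proof. intros H P HP. apply H. exact (filter_imp _ _ (fun x Px _ => Px) HP). Qed.

Lemma eventually_scale_small (tau : T -> R) (d : R) :
  filterlim tau F (at_right 0) -> 0 < d -> F (fun x => 0 < tau x < d).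
Proof.
  intros H Hd. apply (H (fun t => 0 < t < d)). exists (mkposreal d Hd).
  intros t Ht Hpos. split; [exact Hpos |]. apply (ball_R 0 d t) in Ht.
  eapply Rle_lt_trans; [| exact Ht]. rewrite Rminus_0_r. apply Rle_abs.
Qed.

Lemma lim_geom (f : T -> R) (j : nat) :
  filterlim f F (locally 1) -> filterlim (fun x => geom j (f x)) F (locally (INR j)).
Proof. intros Hf. rewrite <- geom_1. exact (lim_cont _ f 1 Hf (geom_continuous j 1)). Qed.

Lemma lim_mvt_select (S c tau g1 g2 : T -> R) (f : R -> R -> R) (C L x1 : R) :
  filterlim c F (locally C) ->
  filterlim (fun p => f (fst p) (snd p)) (near_scale x1) (locally L) ->
  filterlim tau F (at_right 0) ->
  filterlim g1 F (locally x1) -> filterlim g2 F (locally x1) ->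
  F (fun x => exists v, Rabs (v - g1 x) <= Rabs (g2 x - g1 x) /\ S x = c x * f (tau x) v) ->
  filterlim S F (locally (C * L)).
Proof.
  intros Hc Hf Htau H1 H2 HS.
  set (P x v := Rabs (v - g1 x) <= Rabs (g2 x - g1 x) /\ S x = c x * f (tau x) v).
  set (v x := epsilon (inhabits 0) (P x)).
  assert (Hv : F (fun x => P x (v x))).
  { apply (filter_imp _ _ (fun x => epsilon_spec (inhabits 0) (P x)) HS). }
  apply filterlim_ext_loc with (fun x => c x * f (tau x) (v x)).
  { apply (filter_imp _ _ (fun x Px => eq_sym (proj2 Px)) Hv). }
  apply lim_mult; [exact Hc |].
  apply (filterlim_comp_2 (H := locally x1) tau v f Htau); [| exact Hf].
  apply (lim_dominated v g1 g2 x1 H1 H2), (filter_imp _ _ (fun x Px => proj1 Px) Hv).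
Qed.

End Limits.

Lemma neg_sqrt_param q : -2 < q < 0 -> q <> -1 ->
  exists z t, (z = 1 \/ z = -1) /\ 0 < t /\ t ^ 2 <= 3 * Rabs (q + 1)
              /\ q = - sqrt (1 - z * t ^ 2).
Proof.
  intros Hq Hq1.
  destruct (Rlt_dec (-1) q) as [Hlt | Hge];
    [exists 1, (sqrt (1 - q ^ 2)) | exists (-1), (sqrt (q ^ 2 - 1))].
  - assert (0 < 1 - q ^ 2) by nra.
    rewrite pow2_sqrt, Rabs_pos_eq by lra. repeat split; [lra | apply sqrt_lt_R0; lra | nra |].
    replace (1 - 1 * (1 - q ^ 2)) with ((- q) ^ 2) by ring. rewrite sqrt_pow2 by lra. ring.
  - assert (q < -1) by lra. assert (0 < q ^ 2 - 1) by nra.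
    rewrite pow2_sqrt, Rabs_left by lra. repeat split; [lra | apply sqrt_lt_R0; lra | nra |].
    replace (1 - -1 * (q ^ 2 - 1)) with ((- q) ^ 2) by ring. rewrite sqrt_pow2 by lra. ring.
Qed.

Lemma at_right_0_ball (P : R -> Prop) :
  at_right 0 P -> exists d, 0 < d /\ forall t, 0 < t < d -> P t.
Proof.
  intros [d Hd]. exists d. split; [apply cond_pos |]. intros t Ht. apply Hd; [| lra].
  apply ball_R. rewrite Rminus_0_r, Rabs_pos_eq; lra.
Qed.

Lemma limit1_in_of_sides (F : R -> R) (L : R) :
  (forall z, z = 1 \/ z = -1 ->
     filterlim (fun t => F (- sqrt (1 - z * t ^ 2))) (at_right 0) (locally L)) ->
  limit1_in F (fun q => q <> -1) L (-1).
Proof.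
  intros H eps He.
  destruct (at_right_0_ball _ (proj1 (lim_locally_Rabs _ _) (H 1 (or_introl eq_refl)) eps He))
    as [d1 [Hd1 H1]].
  destruct (at_right_0_ball _ (proj1 (lim_locally_Rabs _ _) (H (-1) (or_intror eq_refl)) eps He))
    as [d2 [Hd2 H2]].
  set (d := Rmin 1 (Rmin (d1 * d1) (d2 * d2) / 3)).
  assert (Hd : 0 < d) by (apply Rmin_pos; [lra | apply Rdiv_lt_0_compat; [apply Rmin_pos |]; nra]).
  exists d. split; [exact Hd |]. intros q [Hq Hqd]. simpl in Hqd. unfold R_dist in Hqd.
  replace (q - -1) with (q + 1) in Hqd by ring.
  assert (A1 := Rmin_l 1 (Rmin (d1 * d1) (d2 * d2) / 3)).
  assert (A2 := Rmin_r 1 (Rmin (d1 * d1) (d2 * d2) / 3)).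
  assert (B1 := Rmin_l (d1 * d1) (d2 * d2)). assert (B2 := Rmin_r (d1 * d1) (d2 * d2)).
  fold d in A1, A2. pose proof (Rabs_pos (q + 1)). apply Rabs_def2 in Hqd as Hq2.
  destruct (neg_sqrt_param q ltac:(lra) Hq) as [z [t [[-> | ->] [Ht [Htq ->]]]]];
    [apply H1 | apply H2]; split; try exact Ht; nra.
Qed.

Lemma Rmin_Rmax_dist a b c : Rmin a b <= c <= Rmax a b -> Rabs (c - a) <= Rabs (b - a).
Proof. unfold Rmin, Rmax. destruct (Rle_dec a b); intros Hc; split_Rabs; lra. Qed.

Lemma pow_neq_1 p m : 0 < p -> p <> 1 -> (0 < m)%nat -> p ^ m <> 1.
Proof.
  intros Hp H1 Hm E. destruct (Rlt_dec p 1) as [Hl | Hl].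
  - assert (p ^ m < 1) by (destruct m; [lia | apply pow_lt_1_compat; [lra | lia]]). lra.
  - assert (1 < p ^ m) by (apply Rlt_pow_R1; [lra | lia]). lra.
Qed.

Lemma qpoch_self_neq_0 p n : 0 < p -> p <> 1 -> qpoch p p n <> 0.
Proof.
  intros Hp H1. induction n as [|n IH]; simpl; [lra |].
  apply Rmult_integral_contrapositive; split; [exact IH |].
  rewrite Rmult_comm, tech_pow_Rmult. pose proof (pow_neq_1 p (S n) Hp H1 ltac:(lia)). lra.
Qed.

Definition qbinom (N j : nat) (p : R) : R :=
  if (j <=? N)%nat then gauss_binom N j p else 0.

Lemma qbinom_0 N p : 0 < p -> p <> 1 -> qbinom N 0 p = 1.
Proof.
  intros Hp H1. unfold qbinom, gauss_binom. simpl. rewrite Nat.sub_0_r.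
  pose proof (qpoch_self_neq_0 p N Hp H1). field; auto.
Qed.

Lemma qbinom_pascal N j p : 0 < p -> p <> 1 ->
  qbinom (S N) (S j) p = p ^ S j * qbinom N (S j) p + qbinom N j p.
Proof.
  intros Hp H1. unfold qbinom, gauss_binom.
  pose proof (qpoch_self_neq_0 p N Hp H1). pose proof (qpoch_self_neq_0 p (S N) Hp H1).
  pose proof (qpoch_self_neq_0 p j Hp H1).
  destruct (Nat.leb_spec (S j) (S N)), (Nat.leb_spec (S j) N), (Nat.leb_spec j N); try lia.
  - set (c := (N - S j)%nat).
    replace (S N - S j)%nat with (S c) by lia. replace (N - j)%nat with (S c) by lia.
    assert (HN : p ^ N = p ^ j * p * p ^ c).
    { replace N with (S j + c)%nat by lia. rewrite pow_add. simpl. ring. }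
    pose proof (qpoch_self_neq_0 p c Hp H1).
    pose proof (pow_neq_1 p (S j) Hp H1 ltac:(lia)).
    pose proof (pow_neq_1 p (S c) Hp H1 ltac:(lia)).
    simpl qpoch in *. rewrite HN. simpl in *. field. repeat split; auto; lra.
  - replace j with N by lia. rewrite !Nat.sub_diag. change (qpoch p p 0) with 1. field; auto.
  - ring.
Qed.

Lemma qbinom_sym N j p : (j <= N)%nat -> qbinom N (N - j) p = qbinom N j p.
Proof.
  intros Hj. unfold qbinom, gauss_binom.
  destruct (Nat.leb_spec (N - j) N), (Nat.leb_spec j N); try lia.
  replace (N - (N - j))%nat with j by lia. f_equal; ring.
Qed.

Lemma sum_f_R0_reflect f N : sum_f_R0 (fun j => f (N - j)%nat) N = sum_f_R0 f N.
Proof.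
  revert f. induction N as [|N IH]; intros f; [reflexivity |].
  rewrite decomp_sum by lia. simpl pred. rewrite Nat.sub_0_r.
  rewrite (sum_eq (fun i => f (S N - S i)%nat) (fun i => f (N - i)%nat)) by (intros; f_equal; lia).
  rewrite IH, tech5. ring.
Qed.

Lemma sum_f_R0_antisym f N : (forall j, (j <= N)%nat -> f (N - j)%nat = - f j) ->
  sum_f_R0 f N = 0.
Proof.
  intros Hf. assert (E : sum_f_R0 f N = - sum_f_R0 f N).
  { rewrite <- sum_f_R0_reflect at 1. rewrite (sum_eq _ _ _ Hf).
    rewrite <- (Rmult_1_l (sum_f_R0 f N)), Ropp_mult_distr_l, scal_sum.
    apply sum_eq; intros; ring. }
  lra.
Qed.

Fixpoint triangle (j : nat) : nat :=
  match j with O => O | S j => (triangle j + j)%nat end.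

Lemma triangle_spec j : (2 * triangle j + j = j * j)%nat.
Proof. induction j as [|j IH]; simpl triangle; lia. Qed.

Lemma is_derive_scale_arg (G : R -> R) (c w dG : R) :
  is_derive G (c * w) dG -> is_derive (fun w => G (c * w)) w (c * dG).
Proof.
  intros H.
  assert (Hl : is_derive (fun w : R => c * w) w c).
  { pose proof (is_derive_scal (fun x => x) w c 1 (is_derive_id w)) as H0.
    rewrite Rmult_1_r in H0. exact H0. }
  exact (is_derive_comp G (fun w => c * w) w dG c H Hl).
Qed.

Section GeneratingPolynomial.

Variables r k : nat.

Definition Gsum (N : nat) (y w : R) : R :=
  sum_f_R0 (fun j => (-1) ^ j * (y ^ r) ^ triangle j * qbinom N j (y ^ k) * w ^ j) N.

Lemma Gsum_S N y w : 0 < y -> y <> 1 -> (1 <= k)%nat ->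
  Gsum (S N) y w = Gsum N y (y ^ k * w) - w * Gsum N y (y ^ r * w).
Proof.
  intros Hy H1 Hk.
  assert (Hp : 0 < y ^ k) by (apply pow_lt; auto).
  assert (Hp1 : y ^ k <> 1) by (apply pow_neq_1; auto; lia).
  set (p := y ^ k). set (Y := y ^ r).
  set (u := fun j => (-1) ^ j * Y ^ triangle j * qbinom N j p * (p * w) ^ j).
  set (v := fun j => (-1) ^ j * Y ^ triangle j * qbinom N j p * (Y * w) ^ j).
  assert (Hu : sum_f_R0 u (S N) = sum_f_R0 u N).
  { rewrite tech5. unfold u at 2, qbinom. destruct (Nat.leb_spec (S N) N); [lia | ring]. }
  unfold Gsum. fold p Y. fold u. rewrite <- Hu.
  rewrite !(decomp_sum _ (S N)) by lia. simpl pred.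
  rewrite (sum_eq _ (fun i => u (S i) + v i * - w)).
  2:{ intros i _. unfold u, v. rewrite qbinom_pascal by auto. simpl triangle.
      rewrite pow_add. simpl pow. rewrite !Rpow_mult_distr. ring. }
  rewrite plus_sum, <- scal_sum. unfold u, v. rewrite !qbinom_0 by auto. simpl. ring.
Qed.

Lemma Gsum_odd_root n y : 0 < y -> Gsum (2 * n + 1) y (/ (y ^ r) ^ n) = 0.
Proof.
  intros Hy. set (N := (2 * n + 1)%nat). set (Y := y ^ r).
  assert (HY : 0 < Y) by (apply pow_lt; auto).
  set (h := fun j => (-1) ^ j * Y ^ (triangle j + n * (N - j)) * qbinom N j (y ^ k)).
  assert (Hsum : Gsum N y (/ Y ^ n) * Y ^ (n * N) = sum_f_R0 h N).
  { unfold Gsum. fold Y. rewrite Rmult_comm, scal_sum. apply sum_eq. intros j Hj. unfold h.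
    assert (Hinv : (/ Y ^ n) ^ j * (Y ^ n) ^ j = 1).
    { rewrite <- Rpow_mult_distr, Rinv_l, pow1; [reflexivity | apply pow_nonzero; lra]. }
    replace (Y ^ (n * N)) with (Y ^ (n * (N - j)) * (Y ^ n) ^ j)
      by (rewrite <- pow_mult, <- pow_add; f_equal; nia).
    rewrite pow_add.
    transitivity ((-1) ^ j * (Y ^ triangle j * Y ^ (n * (N - j))) * qbinom N j (y ^ k)
                  * ((/ Y ^ n) ^ j * (Y ^ n) ^ j)); [ring | rewrite Hinv; ring]. }
  assert (Hanti : forall j, (j <= N)%nat -> h (N - j)%nat = - h j).
  { intros j Hj. unfold h. rewrite qbinom_sym by exact Hj.
    replace (triangle (N - j) + n * (N - (N - j)))%nat with (triangle j + n * (N - j))%nat.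
    2:{ pose proof (triangle_spec (N - j)). pose proof (triangle_spec j). unfold N in *. nia. }
    assert (Hsign : (-1) ^ (N - j) * (-1) ^ j = -1).
    { rewrite <- pow_add. replace (N - j + j)%nat with (S (2 * n)) by lia. apply pow_1_odd. }
    assert (Hsq : (-1) ^ j * (-1) ^ j = 1).
    { rewrite <- pow_add. replace (j + j)%nat with (2 * j)%nat by lia. apply pow_1_even. }
    replace ((-1) ^ (N - j)) with (- (-1) ^ j) by nra. ring. }
  apply (Rmult_eq_reg_r (Y ^ (n * N))); [| apply pow_nonzero; lra].
  rewrite Hsum, (sum_f_R0_antisym h N Hanti). ring.
Qed.

(* The recurrence is Gsum_S differentiated d times in w. *)
Fixpoint Gder (N d : nat) (y w : R) : R :=
  match N with
  | O => match d with O => 1 | _ => 0 end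
  | S N => (y ^ k) ^ d * Gder N d y (y ^ k * w)
           - (y ^ r) ^ d * w * Gder N d y (y ^ r * w)
           - INR d * (y ^ r) ^ (d - 1) * Gder N (d - 1) y (y ^ r * w)
  end.

Lemma Gder_derive N : forall d y w, is_derive (Gder N d y) w (Gder N (S d) y w).
Proof.
  induction N as [|N IH]; intros d y w.
  - destruct d; exact (@is_derive_const R_AbsRing _ _ w).
  - pose proof (is_derive_scale_arg _ (y ^ k) w _ (IH d y (y ^ k * w))) as Gk.
    pose proof (is_derive_scale_arg _ (y ^ r) w _ (IH d y (y ^ r * w))) as Gr.
    pose proof (is_derive_scale_arg _ (y ^ r) w _ (IH (d - 1)%nat y (y ^ r * w))) as Gr'.
    pose proof (is_derive_minus _ _ _ _ _
      (is_derive_minus _ _ _ _ _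
        (is_derive_scal _ _ ((y ^ k) ^ d) _ Gk)
        (is_derive_scal _ _ ((y ^ r) ^ d) _
           (is_derive_mult (fun w => w) _ w 1 _ (is_derive_id w) Gr Rmult_comm)))
      (is_derive_scal _ _ (INR d * (y ^ r) ^ (d - 1)) _ Gr')) as H.
    eapply is_derive_ext; [| refine (eq_ind _ (fun z => is_derive _ w z) H _ _)].
    + intros t. unfold minus, plus, opp, mult; simpl. unfold mult; simpl. ring.
    + unfold minus, plus, opp, scal, mult; simpl. unfold mult; simpl.
      destruct d as [|d]; [simpl; ring |].
      replace (S d - 1)%nat with d by lia. replace (S (S d) - 1)%nat with (S d) by lia.
      simpl. ring.
Qed.

Lemma Gder_continuous N d y w : continuity_pt (Gder N d y) w.
Proof.
  apply continuity_pt_filterlim, (@ex_derive_continuous R_AbsRing R_NormedModule).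
  eexists. apply Gder_derive.
Qed.

Lemma Gder_0 N y w : 0 < y -> y <> 1 -> (1 <= k)%nat -> Gder N 0 y w = Gsum N y w.
Proof.
  intros Hy H1 Hk. revert w. induction N as [|N IH]; intros w.
  - unfold Gsum. simpl. rewrite qbinom_0; [ring | apply pow_lt; auto | apply pow_neq_1; auto; lia].
  - rewrite Gsum_S by auto. simpl Gder. rewrite !IH. simpl. ring.
Qed.

Lemma Gder_mvt N d y t a b : 0 < t ->
  exists v, Rabs (v - a) <= Rabs (b - a) /\
    Gder N d y (1 - t * b) - Gder N d y (1 - t * a) = t * (a - b) * Gder N (S d) y (1 - t * v).
Proof.
  intros Ht.
  destruct (MVT_gen (Gder N d y) (1 - t * a) (1 - t * b) (Gder N (S d) y)) as [c [Hc E]].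
  { intros; apply Gder_derive. }
  { intros; apply Gder_continuous. }
  exists ((1 - c) / t). split.
  - apply Rmin_Rmax_dist in Hc.
    replace ((1 - t * b) - (1 - t * a)) with (t * (a - b)) in Hc by ring.
    rewrite (Rabs_minus_sym c), Rabs_mult, (Rabs_pos_eq t), (Rabs_minus_sym a) in Hc by lra.
    replace ((1 - c) / t - a) with ((1 - t * a - c) * / t) by (field; lra).
    rewrite Rabs_mult, (Rabs_pos_eq (/ t)) by (left; apply Rinv_0_lt_compat, Ht).
    apply (Rmult_le_reg_r t); [exact Ht |].
    rewrite Rmult_assoc, Rinv_l by lra. lra.
  - rewrite E. replace (1 - t * ((1 - c) / t)) with c by (field; lra). ring.
Qed.

End GeneratingPolynomial.

Fixpoint Phi_limit (b : R) (N d : nat) (x : R) : R :=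
  match N with
  | O => match d with O => 1 | _ => 0 end
  | S N => x * Phi_limit b N d x - b * Phi_limit b N (S d) x
           - INR d * Phi_limit b N (d - 1) x
  end.

Definition Phi_limit_coef (d i : nat) : R := INR (fact (d + 2 * i)) / (2 ^ i * INR (fact i)).

Lemma INR_fact_pos n : 0 < INR (fact n).
Proof. apply lt_0_INR, lt_O_fact. Qed.

Lemma Phi_limit_coef_pos d i : 0 < Phi_limit_coef d i.
Proof.
  apply Rdiv_lt_0_compat; [apply INR_fact_pos |].
  apply Rmult_lt_0_compat; [apply pow_lt; lra | apply INR_fact_pos].
Qed.

Lemma Phi_limit_coef_Sd d i : Phi_limit_coef (S d) i = INR (S d + 2 * i) * Phi_limit_coef d i.
Proof.
  unfold Phi_limit_coef. replace (S d + 2 * i)%nat with (S (d + 2 * i)) by lia.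
  rewrite fact_simpl, mult_INR. unfold Rdiv. ring.
Qed.

Lemma Phi_limit_coef_Si d i :
  Phi_limit_coef d (S i) = Phi_limit_coef (S d) i + INR d * Phi_limit_coef (d - 1) (S i).
Proof.
  unfold Phi_limit_coef. set (M := (d + 2 * i)%nat).
  replace (d + 2 * S i)%nat with (S (S M)) by lia.
  replace (S d + 2 * i)%nat with (S M) by lia.
  rewrite !fact_simpl, !mult_INR. simpl pow.
  pose proof (INR_fact_pos i). pose proof (INR_fact_pos M). pose proof (pow_lt 2 i ltac:(lra)).
  destruct d as [|d].
  - rewrite !S_INR. unfold M. rewrite plus_INR, mult_INR. simpl INR.
    field. pose proof (pos_INR i). lra.
  - replace (S d - 1 + 2 * S i)%nat with (S M) by lia.
    rewrite fact_simpl, mult_INR, !S_INR. unfold M. rewrite plus_INR, mult_INR, S_INR. simpl INR.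
    field. pose proof (pos_INR i). lra.
Qed.

Lemma Phi_limit_below b N d : (N < d)%nat -> Phi_limit b N d 0 = 0.
Proof.
  revert d. induction N as [|N IH]; intros d Hd; simpl.
  - destruct d; [lia | reflexivity].
  - rewrite !IH by lia. ring.
Qed.

Lemma Phi_limit_at_0 b d i :
  Phi_limit b (d + 2 * i) d 0 = (-1) ^ d * Phi_limit_coef d i * b ^ i.
Proof.
  remember (d + 2 * i)%nat as M eqn:HM. revert d i HM.
  induction M as [|M IH]; intros d i HM.
  - replace d with 0%nat by lia. replace i with 0%nat by lia.
    unfold Phi_limit_coef. simpl. field.
  - simpl Phi_limit. rewrite Rmult_0_l. destruct i as [|i].
    + destruct d as [|d]; [lia |].
      replace (S d - 1)%nat with d by lia.
      rewrite Phi_limit_below, (IH d 0%nat), Phi_limit_coef_Sd by lia.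
      replace (S d + 2 * 0)%nat with (S d) by lia. simpl. ring.
    + rewrite (IH (S d) i) by lia. rewrite (Phi_limit_coef_Si d i).
      destruct d as [|d]; [simpl; ring |].
      replace (S d - 1)%nat with d by lia. rewrite (IH d (S i)) by lia. simpl. ring.
Qed.

Lemma Phi_limit_even b n : Phi_limit b (2 * n) 0 0 = Phi_limit_coef 0 n * b ^ n.
Proof. rewrite <- (Nat.add_0_l (2 * n)), Phi_limit_at_0. simpl. ring. Qed.

Lemma Phi_limit_odd b n :
  Phi_limit b (2 * n + 1) 1 0 = - INR (2 * n + 1) * Phi_limit_coef 0 n * b ^ n.
Proof.
  replace (2 * n + 1)%nat with (1 + 2 * n)%nat by lia.
  rewrite Phi_limit_at_0, Phi_limit_coef_Sd. simpl. ring.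
Qed.

Lemma Phi_limit_coef_0_S n : Phi_limit_coef 0 (S n) = Phi_limit_coef 0 n * INR (2 * n + 1).
Proof.
  rewrite Phi_limit_coef_Si, Phi_limit_coef_Sd. simpl INR at 2.
  replace (1 + 2 * n)%nat with (2 * n + 1)%nat by lia. ring.
Qed.

Section Scaling.

Variables (r k : nat) (z : R).

(* q = - sqrt (yscale t) tends to -1 from the right for z = 1 and from the left for z = -1. *)
Definition yscale (t : R) : R := 1 - z * t ^ 2.

Definition Phi (N d : nat) (t u : R) : R :=
  t ^ d * Gder r k N d (yscale t) (1 - t * u) / t ^ N.

Definition shift (s : nat) (t u : R) : R := z * t * geom s (yscale t) + yscale t ^ s * u.

Lemma yscale_pow s t : yscale t ^ s = 1 - z * t ^ 2 * geom s (yscale t).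
Proof.
  pose proof (geom_spec s (yscale t)) as H.
  replace (1 - yscale t) with (z * t ^ 2) in H by (unfold yscale; ring). lra.
Qed.

Lemma shift_spec s t u : 1 - t * shift s t u = yscale t ^ s * (1 - t * u).
Proof. unfold shift. rewrite !yscale_pow. ring. Qed.

Section ScaleLimits.

Context {T : Type} {F : (T -> Prop) -> Prop} {FF : Filter F}.
Variable tau : T -> R.
Hypothesis Htau : filterlim tau F (at_right 0).

Lemma lim_yscale : filterlim (fun x => yscale (tau x)) F (locally 1).
Proof.
  replace (locally 1) with (locally (1 - z * 0 ^ 2)) by (f_equal; ring).
  apply lim_minus; [apply filterlim_const |].
  apply lim_mult; [apply filterlim_const | apply lim_pow, lim_scale_locally, Htau].
Qed.

Lemma lim_shift s (g : T -> R) x0 :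
  filterlim g F (locally x0) -> filterlim (fun x => shift s (tau x) (g x)) F (locally x0).
Proof.
  intros Hg. replace (locally x0) with (locally (z * 0 * INR s + 1 ^ s * x0))
    by (f_equal; rewrite pow1; ring).
  apply lim_plus; apply lim_mult.
  - apply lim_mult; [apply filterlim_const | apply lim_scale_locally, Htau].
  - apply lim_geom, lim_yscale.
  - apply lim_pow, lim_yscale.
  - exact Hg.
Qed.

End ScaleLimits.

Definition Phi_diff (N d : nat) (t u : R) : R :=
  (yscale t ^ k) ^ d * t ^ d
  * (Gder r k N d (yscale t) (1 - t * shift k t u) - Gder r k N d (yscale t) (1 - t * shift r t u))
  / t ^ S N.

Lemma Phi_S N d t u : 0 < t ->
  Phi (S N) d t u =
    Phi_diff N d t u
    + z * t * (geom (r * d) (yscale t) - geom (k * d) (yscale t)) * Phi N d t (shift r t u)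
    + (yscale t ^ r) ^ d * u * Phi N d t (shift r t u)
    - INR d * (yscale t ^ r) ^ (d - 1) * Phi N (d - 1) t (shift r t u).
Proof.
  intros Ht. unfold Phi, Phi_diff. rewrite !shift_spec.
  replace (z * t * (geom (r * d) (yscale t) - geom (k * d) (yscale t)))
    with (((yscale t ^ k) ^ d - (yscale t ^ r) ^ d) / t)
    by (rewrite <- !pow_mult, !yscale_pow; field; lra).
  simpl Gder. set (y := yscale t). rewrite <- !tech_pow_Rmult.
  destruct d as [|d].
  - simpl INR. field. split; [apply pow_nonzero |]; lra.
  - replace (S d - 1)%nat with d by lia. rewrite <- !tech_pow_Rmult, S_INR.
    field. split; [apply pow_nonzero |]; lra.
Qed.

Lemma Phi_diff_mvt N d t u : 0 < t ->
  exists v, Rabs (v - shift r t u) <= Rabs (shift k t u - shift r t u) /\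
    Phi_diff N d t u =
      (yscale t ^ k) ^ d * (1 - t * u) * (z * (geom r (yscale t) - geom k (yscale t)))
      * Phi N (S d) t v.
Proof.
  intros Ht.
  destruct (Gder_mvt r k N d (yscale t) t (shift r t u) (shift k t u) Ht) as [v [Hv E]].
  exists v. split; [exact Hv |].
  unfold Phi_diff, Phi. rewrite E.
  replace (shift r t u - shift k t u)
    with (z * t * (geom r (yscale t) - geom k (yscale t)) * (1 - t * u))
    by (unfold shift; rewrite !yscale_pow; ring).
  rewrite <- !tech_pow_Rmult. field. split; [apply pow_nonzero |]; lra.
Qed.

Lemma lim_Phi_diff N d x0 L :
  filterlim (fun p => Phi N (S d) (fst p) (snd p)) (near_scale x0) (locally L) ->
  filterlim (fun p => Phi_diff N d (fst p) (snd p)) (near_scale x0)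
    (locally (z * (INR r - INR k) * L)).
Proof.
  intros HL.
  assert (Hfst : filterlim fst (near_scale x0) (at_right 0)) by apply filterlim_fst.
  assert (Hsnd : filterlim snd (near_scale x0) (locally x0)) by apply filterlim_snd.
  assert (Hy := lim_yscale fst Hfst).
  replace (z * (INR r - INR k) * L)
    with ((1 ^ k) ^ d * (1 - 0 * x0) * (z * (INR r - INR k)) * L) by (rewrite !pow1; ring).
  apply (lim_mvt_select _
           (fun p => (yscale (fst p) ^ k) ^ d * (1 - fst p * snd p)
                     * (z * (geom r (yscale (fst p)) - geom k (yscale (fst p)))))
           fst (fun p => shift r (fst p) (snd p)) (fun p => shift k (fst p) (snd p))
           (Phi N (S d)) _ _ x0); try apply lim_shift; auto.
  - apply lim_mult; [apply lim_mult |].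
    + apply lim_pow, lim_pow, Hy.
    + apply lim_minus; [apply filterlim_const |].
      apply lim_mult; [apply lim_scale_locally |]; auto.
    + apply lim_mult; [apply filterlim_const | apply lim_minus; apply lim_geom, Hy].
  - generalize (eventually_scale_small fst 1 Hfst ltac:(lra)). apply filter_imp.
    intros p [Hp _]. exact (Phi_diff_mvt N d (fst p) (snd p) Hp).
Qed.

Lemma lim_Phi N : forall d x0,
  filterlim (fun p => Phi N d (fst p) (snd p)) (near_scale x0)
    (locally (Phi_limit ((INR k - INR r) * z) N d x0)).
Proof.
  induction N as [|N IH]; intros d x0.
  - apply filterlim_ext with (fun _ => Phi_limit ((INR k - INR r) * z) 0 d x0);
      [| apply filterlim_const].
    intros p. unfold Phi. destruct d; simpl; field.
  - set (b := (INR k - INR r) * z).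
    assert (Hfst : filterlim fst (near_scale x0) (at_right 0)) by apply filterlim_fst.
    assert (Hsnd : filterlim snd (near_scale x0) (locally x0)) by apply filterlim_snd.
    assert (Hy := lim_yscale fst Hfst).
    assert (HPhi : forall d', filterlim (fun p => Phi N d' (fst p) (shift r (fst p) (snd p)))
                                (near_scale x0) (locally (Phi_limit b N d' x0))).
    { intros d'. exact (filterlim_comp_2 fst _ (Phi N d') Hfst (lim_shift fst Hfst r snd x0 Hsnd)
                          (IH d' x0)). }
    apply filterlim_ext_loc with (fun p =>
      Phi_diff N d (fst p) (snd p)
      + z * fst p * (geom (r * d) (yscale (fst p)) - geom (k * d) (yscale (fst p)))
        * Phi N d (fst p) (shift r (fst p) (snd p))
      + (yscale (fst p) ^ r) ^ d * snd p * Phi N d (fst p) (shift r (fst p) (snd p))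
      - INR d * (yscale (fst p) ^ r) ^ (d - 1) * Phi N (d - 1) (fst p) (shift r (fst p) (snd p))).
    { generalize (eventually_scale_small fst 1 Hfst ltac:(lra)). apply filter_imp.
      intros p [Hp _]. symmetry. exact (Phi_S N d (fst p) (snd p) Hp). }
    replace (Phi_limit b (S N) d x0) with
      (z * (INR r - INR k) * Phi_limit b N (S d) x0
       + z * 0 * (INR (r * d) - INR (k * d)) * Phi_limit b N d x0
       + (1 ^ r) ^ d * x0 * Phi_limit b N d x0
       - INR d * (1 ^ r) ^ (d - 1) * Phi_limit b N (d - 1) x0)
      by (unfold b; simpl; rewrite !pow1; ring).
    apply lim_minus; [apply lim_plus; [apply lim_plus |] |].
    + apply lim_Phi_diff, IH.
    + apply lim_mult; [| apply HPhi].
      apply lim_mult; [apply lim_mult; [apply filterlim_const | apply lim_scale_locally, Hfst] |].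
      apply lim_minus; apply lim_geom, Hy.
    + apply lim_mult; [| apply HPhi]. apply lim_mult; [apply lim_pow, lim_pow, Hy | exact Hsnd].
    + apply lim_mult; [| apply HPhi].
      apply lim_mult; [apply filterlim_const | apply lim_pow, lim_pow, Hy].
Qed.

End Scaling.

Lemma one_plus_pow_odd j q : Nat.odd j = true -> 1 + q ^ j = (1 + q) * geom j (- q).
Proof.
  intros Hj. replace (1 + q) with (1 - - q) by ring. rewrite <- geom_spec.
  apply Nat.odd_spec in Hj. destruct Hj as [i ->].
  replace (- q) with (-1 * q) by ring. rewrite Rpow_mult_distr, Nat.add_1_r, pow_1_odd. ring.
Qed.

Fixpoint qpoch_even_red (n : nat) (q : R) : R :=
  match n with
  | O => 1
  | S n => qpoch_even_red n q * geom (2 * n + 1) (- q) * ((1 + q ^ (2 * n + 2)) / (1 - q))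
  end.

Lemma qpoch_neg_even q n : q <> 1 -> qpoch (- q) q (2 * n) = (1 - q ^ 2) ^ n * qpoch_even_red n q.
Proof.
  intros Hq. induction n as [|n IH]; [simpl; ring |].
  replace (2 * S n)%nat with (S (S (2 * n))) by lia.
  change (qpoch (- q) q (S (S (2 * n)))) with
    (qpoch (- q) q (2 * n) * (1 - q ^ (2 * n) * - q) * (1 - q * q ^ (2 * n) * - q)).
  change (qpoch_even_red (S n) q) with
    (qpoch_even_red n q * geom (2 * n + 1) (- q) * ((1 + q ^ (2 * n + 2)) / (1 - q))).
  rewrite IH.
  replace (1 - q ^ (2 * n) * - q) with ((1 + q) * geom (2 * n + 1) (- q)).
  2:{ rewrite <- one_plus_pow_odd by (rewrite Nat.odd_add, Nat.odd_mul; reflexivity).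
      rewrite Nat.add_1_r. simpl. ring. }
  replace (q ^ (2 * n + 2)) with (q ^ 2 * q ^ (2 * n)) by (rewrite <- pow_add; f_equal; lia).
  simpl pow. field. lra.
Qed.

Lemma qpoch_neg_odd q n : q <> 1 ->
  qpoch (- q) q (2 * n + 1)
  = (1 - q ^ 2) ^ n * qpoch_even_red n q * ((1 + q) * geom (2 * n + 1) (- q)).
Proof.
  intros Hq. rewrite (Nat.add_1_r (2 * n)) at 1. cbn [qpoch].
  rewrite qpoch_neg_even, <- one_plus_pow_odd
    by (auto; rewrite Nat.odd_add, Nat.odd_mul; reflexivity).
  rewrite Nat.add_1_r, <- (tech_pow_Rmult q (2 * n)). ring.
Qed.

Lemma qpoch_even_red_pos n x : 0 < x -> 0 < qpoch_even_red n (- x).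
Proof.
  intros Hx. induction n as [|n IH]; cbn [qpoch_even_red]; [lra |].
  rewrite Ropp_involutive.
  assert (1 <= geom (2 * n + 1) x) by (apply geom_ge_1; [exact Hx | lia]).
  assert (0 < (- x) ^ (2 * n + 2)) by (replace (2 * n + 2)%nat with (2 * (n + 1))%nat by lia;
    rewrite pow_mult; apply pow_lt; nra).
  apply Rmult_lt_0_compat; [nra |]. apply Rdiv_lt_0_compat; lra.
Qed.

Lemma lim_qpoch_even_red {T} {F : (T -> Prop) -> Prop} {FF : Filter F} (g : T -> R) n :
  filterlim g F (locally (-1)) ->
  filterlim (fun x => qpoch_even_red n (g x)) F (locally (Phi_limit_coef 0 n)).
Proof.
  intros Hg. induction n as [|n IH].
  - replace (Phi_limit_coef 0 0) with 1 by (unfold Phi_limit_coef; simpl; field).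
    apply filterlim_const.
  - rewrite Phi_limit_coef_0_S. cbn [qpoch_even_red].
    replace (Phi_limit_coef 0 n * INR (2 * n + 1))
      with (Phi_limit_coef 0 n * INR (2 * n + 1) * ((1 + (-1) ^ (2 * n + 2)) * / (1 - -1)))
      by (replace (2 * n + 2)%nat with (2 * (n + 1))%nat by lia; rewrite pow_1_even; field).
    apply lim_mult; [apply lim_mult |]; [exact IH | |].
    + apply lim_geom. replace (locally 1) with (locally (- -1)) by (f_equal; ring).
      apply lim_opp, Hg.
    + apply lim_mult; [apply lim_plus; [apply filterlim_const | apply lim_pow, Hg] |].
      apply lim_inv; [apply lim_minus; [apply filterlim_const | exact Hg] | lra].
Qed.

Lemma cor_num_Gsum r m k N q : Nat.odd (r + m) = true ->
  cor_num r m k N q = Gsum r k N (q ^ 2) ((- q) ^ (r + m)).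
Proof.
  intros Hs. unfold cor_num, Gsum. apply sum_eq. intros j Hj.
  unfold qbinom. destruct (Nat.leb_spec j N); [| lia].
  rewrite <- !pow_mult.
  apply Nat.odd_spec in Hs. destruct Hs as [u Hu]. rewrite Hu.
  replace (- q) with (-1 * q) by ring. rewrite Rpow_mult_distr.
  replace ((-1) ^ ((2 * u + 1) * j)) with ((-1) ^ j)
    by (replace ((2 * u + 1) * j)%nat with (2 * (u * j) + j)%nat by lia;
        rewrite pow_add, pow_1_even; ring).
  assert (Hsq : (-1) ^ j * (-1) ^ j = 1)
    by (rewrite <- pow_add, <- (pow_1_even j); f_equal; lia).
  replace (r * j * j + m * j)%nat with (2 * (r * triangle j) + (2 * u + 1) * j)%nat
    by (pose proof (triangle_spec j); nia).
  rewrite pow_add.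
  transitivity (((-1) ^ j * (-1) ^ j) * (q ^ (2 * (r * triangle j)) * q ^ ((2 * u + 1) * j))
                * gauss_binom N j (q ^ (2 * k))); [rewrite Hsq; ring | ring].
Qed.

Section Sides.

Variables (r m k n : nat) (z : R).
Hypotheses (hk : (1 <= k)%nat) (hrm : Nat.odd (r + m) = true) (hz : z = 1 \/ z = -1).

Definition xroot (t : R) : R := sqrt (yscale z t).

Lemma yscale_range t : 0 < t < 1/2 -> 0 < yscale z t /\ yscale z t <> 1.
Proof. intros Ht. unfold yscale. destruct hz as [-> | ->]; split; nra. Qed.

Lemma xroot_spec t :
  0 < t < 1/2 -> xroot t * xroot t = yscale z t /\ 0 < xroot t /\ xroot t <> 1.
Proof.
  intros Ht. destruct (yscale_range t Ht) as [Y1 Y2]. unfold xroot.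
  rewrite sqrt_sqrt by lra. split; [reflexivity | split; [apply sqrt_lt_R0, Y1 |]].
  intros E. apply Y2. rewrite <- (sqrt_sqrt (yscale z t)), E by lra. ring.
Qed.

Lemma z_pow_sq : z ^ n * z ^ n = 1.
Proof.
  rewrite <- Rpow_mult_distr. replace (z * z) with 1 by (destruct hz; subst; ring). apply pow1.
Qed.

Lemma lim_xroot : filterlim xroot (at_right 0) (locally 1).
Proof.
  rewrite <- sqrt_1. apply (lim_cont sqrt (yscale z)); [| apply continuity_pt_sqrt; lra].
  exact (lim_yscale z (fun t => t) (filterlim_id _ _)).
Qed.

Definition u_xpow (s : nat) (t : R) : R := z * t * geom s (xroot t) / (1 + xroot t).

Lemma u_xpow_spec s t : 0 < t < 1/2 -> 1 - t * u_xpow s t = xroot t ^ s.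
Proof.
  intros Ht. destruct (xroot_spec t Ht) as [X1 [X2 _]].
  assert (E : 1 - xroot t = z * t ^ 2 / (1 + xroot t)).
  { apply (Rmult_eq_reg_r (1 + xroot t)); [| lra]. unfold Rdiv.
    rewrite Rmult_assoc, Rinv_l by lra. unfold yscale in X1. nra. }
  pose proof (geom_spec s (xroot t)) as G. rewrite E in G.
  unfold u_xpow. replace (xroot t ^ s) with (1 - (1 - xroot t ^ s)) by ring.
  rewrite G. field. lra.
Qed.

Lemma lim_u_xpow s : filterlim (u_xpow s) (at_right 0) (locally 0).
Proof.
  replace (locally 0) with (locally (z * 0 * INR s * / (1 + 1))) by (f_equal; field).
  apply lim_mult; [apply lim_mult; [apply lim_mult |] |].
  - apply filterlim_const.
  - apply lim_scale_locally, filterlim_id.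
  - apply lim_geom, lim_xroot.
  - apply lim_inv; [apply lim_plus; [apply filterlim_const | apply lim_xroot] | lra].
Qed.

Definition u_root (t : R) : R :=
  - z * t * geom (r * n) (yscale z t) / yscale z t ^ (r * n).

Lemma u_root_spec t : 0 < t < 1/2 -> 1 - t * u_root t = / (yscale z t ^ r) ^ n.
Proof.
  intros Ht. destruct (yscale_range t Ht) as [Y1 _].
  assert (0 < yscale z t ^ (r * n)) by (apply pow_lt; exact Y1).
  unfold u_root. rewrite <- pow_mult.
  apply (Rmult_eq_reg_r (yscale z t ^ (r * n))); [| lra].
  rewrite Rinv_l by lra.
  transitivity (yscale z t ^ (r * n) + z * t ^ 2 * geom (r * n) (yscale z t)); [field; lra |].
  rewrite yscale_pow. ring.
Qed.

Lemma lim_u_root : filterlim u_root (at_right 0) (locally 0).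
Proof.
  assert (Hy := lim_yscale z (fun t => t) (filterlim_id _ _)).
  replace (locally 0) with (locally (- z * 0 * INR (r * n) * / 1 ^ (r * n)))
    by (f_equal; rewrite pow1; field).
  apply lim_mult; [apply lim_mult; [apply lim_mult |] |].
  - apply filterlim_const.
  - apply lim_scale_locally, filterlim_id.
  - apply lim_geom, Hy.
  - apply lim_inv; [apply lim_pow, Hy | rewrite pow1; lra].
Qed.

Lemma z_pow_inv : / z ^ n = z ^ n.
Proof.
  assert (Hz : z ^ n <> 0) by (intro E; pose proof z_pow_sq as H; rewrite E in H; lra).
  rewrite <- (Rmult_1_r (/ z ^ n)), <- z_pow_sq, <- Rmult_assoc, Rinv_l by exact Hz. ring.
Qed.

Lemma lim_neg_xroot : filterlim (fun t => - xroot t) (at_right 0) (locally (-1)).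
Proof.
  replace (locally (-1)) with (locally (- 1)) by (f_equal; ring). apply lim_opp, lim_xroot.
Qed.

Lemma even_ratio_eq t : 0 < t < 1/2 ->
  cor_ratio r m k (2 * n) (- xroot t)
  = Phi r k z (2 * n) 0 t (u_xpow (r + m) t) * (z ^ n / qpoch_even_red n (- xroot t)).
Proof.
  intros Ht. destruct (xroot_spec t Ht) as [X1 [X2 _]]. destruct (yscale_range t Ht) as [Y1 Y2].
  pose proof (qpoch_even_red_pos n (xroot t) X2).
  unfold cor_ratio, Phi. rewrite cor_num_Gsum, qpoch_neg_even, u_xpow_spec by (auto; lra).
  replace ((- - xroot t) ^ (r + m)) with (xroot t ^ (r + m)) by (f_equal; ring).
  replace ((- xroot t) ^ 2) with (yscale z t) by (rewrite <- X1; ring).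
  rewrite <- Gder_0 by auto.
  replace (1 - yscale z t) with (z * t ^ 2) by (unfold yscale; ring).
  rewrite <- z_pow_inv, Rpow_mult_distr, <- pow_mult.
  field. split; [| split]; try apply pow_nonzero; lra.
Qed.

Lemma lim_even_side :
  filterlim (fun t => cor_ratio r m k (2 * n) (- sqrt (yscale z t))) (at_right 0)
    (locally ((INR k - INR r) ^ n)).
Proof.
  apply filterlim_ext_loc with
    (fun t => Phi r k z (2 * n) 0 t (u_xpow (r + m) t) * (z ^ n / qpoch_even_red n (- xroot t))).
  { generalize (eventually_scale_small (fun t => t) (1/2) (filterlim_id _ _) ltac:(lra)).
    apply filter_imp. intros t Ht. symmetry. exact (even_ratio_eq t Ht). }
  assert (HC := Phi_limit_coef_pos 0 n).
  replace ((INR k - INR r) ^ n)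
    with (Phi_limit ((INR k - INR r) * z) (2 * n) 0 0 * (z ^ n / Phi_limit_coef 0 n)).
  2:{ rewrite Phi_limit_even, Rpow_mult_distr.
      transitivity ((INR k - INR r) ^ n * (z ^ n * z ^ n)); [field; lra |].
      rewrite z_pow_sq; ring. }
  apply lim_mult.
  - exact (filterlim_comp_2 (fun t => t) (u_xpow (r + m)) (Phi r k z (2 * n) 0)
             (filterlim_id _ _) (lim_u_xpow _) (lim_Phi r k z (2 * n) 0 0)).
  - apply lim_mult; [apply filterlim_const |].
    apply lim_inv; [apply lim_qpoch_even_red, lim_neg_xroot | lra].
Qed.

Lemma u_root_gap t : 0 < t < 1/2 ->
  t * (u_root t - u_xpow (r + m) t)
  = - (1 - xroot t) * geom (r + m + 2 * r * n) (xroot t) / xroot t ^ (2 * r * n).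
Proof.
  intros Ht. destruct (xroot_spec t Ht) as [X1 [X2 _]].
  replace (t * (u_root t - u_xpow (r + m) t))
    with ((1 - t * u_xpow (r + m) t) - (1 - t * u_root t)) by ring.
  rewrite u_xpow_spec, u_root_spec by exact Ht. set (x := xroot t) in *.
  replace ((yscale z t ^ r) ^ n) with (x ^ (2 * r * n))
    by (rewrite <- X1, <- pow_mult; replace (x * x) with (x ^ 2) by ring;
        rewrite <- pow_mult; f_equal; lia).
  replace (- (1 - x) * geom (r + m + 2 * r * n) x) with (- (1 - x ^ (r + m + 2 * r * n)))
    by (rewrite geom_spec; ring).
  assert (0 < x ^ (2 * r * n)) by (apply pow_lt, X2).
  rewrite (pow_add x (r + m)). field. lra.
Qed.

Definition odd_factor (t : R) : R :=
  - geom (r + m + 2 * r * n) (xroot t) / xroot t ^ (2 * r * n)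
  * (z ^ n / (qpoch_even_red n (- xroot t) * geom (2 * n + 1) (xroot t))).

Lemma odd_ratio_mvt t : 0 < t < 1/2 ->
  exists v, Rabs (v - u_root t) <= Rabs (u_xpow (r + m) t - u_root t) /\
    cor_ratio r m k (2 * n + 1) (- xroot t) = odd_factor t * Phi r k z (2 * n + 1) 1 t v.
Proof.
  intros Ht. destruct (xroot_spec t Ht) as [X1 [X2 X3]]. destruct (yscale_range t Ht) as [Y1 Y2].
  destruct (Gder_mvt r k (2 * n + 1) 0 (yscale z t) t (u_root t) (u_xpow (r + m) t) (proj1 Ht))
    as [v [Hv E]].
  exists v. split; [exact Hv |].
  rewrite u_xpow_spec, u_root_spec, !Gder_0, Gsum_odd_root, Rminus_0_r, u_root_gap in E by auto.
  unfold cor_ratio, Phi, odd_factor.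
  rewrite cor_num_Gsum, qpoch_neg_odd, Ropp_involutive by (auto; lra).
  set (x := xroot t) in *.
  replace ((- x) ^ 2) with (yscale z t) by (rewrite <- X1; ring).
  replace (1 - yscale z t) with (z * t ^ 2) by (unfold yscale; ring).
  rewrite E, <- z_pow_inv, Rpow_mult_distr, <- pow_mult, Nat.add_1_r.
  pose proof (qpoch_even_red_pos n x X2).
  pose proof (geom_ge_1 (S (2 * n)) x X2 ltac:(lia)).
  assert (0 < x ^ (2 * r * n)) by (apply pow_lt, X2).
  assert (1 - x <> 0) by (intros E1; apply X3; lra).
  assert (z <> 0) by (destruct hz; lra).
  rewrite <- !tech_pow_Rmult. field. repeat split; try apply pow_nonzero; lra.
Qed.

Lemma lim_odd_side :
  filterlim (fun t => cor_ratio r m k (2 * n + 1) (- sqrt (yscale z t))) (at_right 0)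
    (locally ((INR (2 * n + 1) * INR r + INR m) * (INR k - INR r) ^ n)).
Proof.
  assert (HC := Phi_limit_coef_pos 0 n).
  assert (H2n : 0 < INR (2 * n + 1)) by (apply lt_0_INR; lia).
  replace ((INR (2 * n + 1) * INR r + INR m) * (INR k - INR r) ^ n) with
    (- INR (r + m + 2 * r * n) / 1 ^ (2 * r * n)
       * (z ^ n / (Phi_limit_coef 0 n * INR (2 * n + 1)))
     * Phi_limit ((INR k - INR r) * z) (2 * n + 1) 1 0).
  2:{ rewrite Phi_limit_odd, Rpow_mult_distr, pow1.
      transitivity (INR (r + m + 2 * r * n) * (INR k - INR r) ^ n * (z ^ n * z ^ n));
        [field; lra |].
      rewrite z_pow_sq, !plus_INR, !mult_INR. simpl INR. ring. }
  apply (lim_mvt_select _ odd_factor (fun t => t) u_root (u_xpow (r + m))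
           (Phi r k z (2 * n + 1) 1) _ _ 0).
  - unfold odd_factor, Rdiv. apply lim_mult; [apply lim_mult |].
    + apply lim_opp, lim_geom, lim_xroot.
    + apply lim_inv; [apply lim_pow, lim_xroot | rewrite pow1; lra].
    + apply lim_mult; [apply filterlim_const |].
      apply lim_inv; [| nra].
      apply lim_mult; [apply lim_qpoch_even_red, lim_neg_xroot | apply lim_geom, lim_xroot].
  - apply lim_Phi.
  - apply filterlim_id.
  - apply lim_u_root.
  - apply lim_u_xpow.
  - generalize (eventually_scale_small (fun t => t) (1/2) (filterlim_id _ _) ltac:(lra)).
    apply filter_imp. exact odd_ratio_mvt.
Qed.

End Sides.

Theorem corollary2p5 (r m k n : nat) (hk : (1 <= k)%nat)
  (hrm : Nat.odd (r + m) = true) :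
  limit1_in (cor_ratio r m k (2 * n)) (fun q => q <> -1)
    ((INR k - INR r) ^ n) (-1)
  /\
  limit1_in (cor_ratio r m k (2 * n + 1)) (fun q => q <> -1)
    ((INR (2 * n + 1) * INR r + INR m) * (INR k - INR r) ^ n) (-1).
Proof.
  split; apply limit1_in_of_sides; intros z hz.
  - exact (lim_even_side r m k n z hk hrm hz).
  - exact (lim_odd_side r m k n z hk hrm hz).
Qed.
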